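(* Let $X$ be a Banach space and $M,N:\Sigma\to cb(X)$ be $d_H$-multimeasures. Suppose there exists a bounded measurable $\theta:\Omega\to\mathbb R$ such that $\langle y',j\circ M(E)\rangle=\int_E\theta\,d\langle y',j\circ N\rangle$ for all $E\in\Sigma$ and all $y'\in\ell_\infty(B_{X'})'$. Then there exists $d>0$ such that for every $E\in\Sigma$ $$M(E)\subseteq d\,\overline{\mathrm{aco}}\big[\mathcal R(N_E)\cup\mathcal R(-N_E)\big].$$
   Context: $(\Omega,\Sigma)$ is a measurable space, $X$ a Banach space with dual unit ball $B_{X'}$. $cb(X)$: nonempty closed bounded convex subsets of $X$ with Hausdorff metric $d_H$; $s(x',C)=\sup\{\langle x',x\rangle:x\in C\}$. A $d_H$-multimeasure is $M:\Sigma\to cb(X)$ countably additive in $d_H$. $-N$: $E\mapsto\{-x:x\in N(E)\}$. Rådström embedding: $j(A)=s(\cdot,A)|_{B_{X'}}\in\ell_\infty(B_{X'})$. $\Sigma_E=\{F\in\Sigma:F\subseteq E\}$; $\mathcal R(N_E)=\{z\in X:\exists F\in\Sigma_E,\ z\in N(F)\}$, and similarly $\mathcal R(-N_E)$. $\overline{\mathrm{aco}}$ denotes the closed absolutely convex hull in $X$. *)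

From HB Require Import structures.
From mathcomp Require Import all_boot all_order all_algebra.
From mathcomp Require Import all_classical all_reals all_analysis.
Set Implicit Arguments. Unset Strict Implicit. Unset Printing Implicit Defensive.
Import Order.TTheory GRing.Theory Num.Theory.
Import numFieldNormedType.Exports.
Local Open Scope classical_set_scope.
Local Open Scope ring_scope.

Section Defs.
Context {R : realType} {X : normedModType R}.

Definition in_dual_ball (f : X -> R) : Prop :=
  (forall (a : R) (x y : X), f (a *: x + y) = a * f x + f y) /\
  (forall x : X, `|f x| <= `|x|).

Definition dual_ball : Type := {f : X -> R | in_dual_ball f}.

(* support function s(x', C) (C nonempty bounded, so the sup is finite) *)
Definition supp_fun (f : X -> R) (C : set X) : R :=
  fine (ereal_sup [set (f x)%:E | x in C]).

(* Radstrom embedding j(A) = s(., A) restricted to B_{X'} *)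
Definition radstrom (A : set X) : dual_ball -> R :=
  fun u => supp_fun (proj1_sig u) A.

(* ell_infty(B_{X'}) : bounded functions on B_{X'} with the sup norm *)
Definition linf_bounded (g : dual_ball -> R) : Prop :=
  exists C : R, forall u, `|g u| <= C.

Definition linf_norm (g : dual_ball -> R) : R :=
  fine (ereal_sup [set (`|g u|)%:E | u in [set: dual_ball]]).

(* y' in ell_infty(B_{X'})' : a bounded linear functional on ell_infty(B_{X'})
   (its values outside ell_infty are irrelevant) *)
Definition linf_dual (y : (dual_ball -> R) -> R) : Prop :=
  (forall (a : R) g h, linf_bounded g -> linf_bounded h ->
     y (fun u => a * g u + h u) = a * y g + y h) /\
  (exists C : R, forall g, linf_bounded g -> `|y g| <= C * linf_norm g).

Definition convex_set_X (C : set X) : Prop :=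
  forall x y t, C x -> C y -> 0 <= t <= 1 -> C (t *: x + (1 - t) *: y).

Definition cb (C : set X) : Prop :=
  C !=set0 /\ closed C /\ bounded_set C /\ convex_set_X C.

Definition hausdorff (A B : set X) : \bar R :=
  maxe (ereal_sup [set ereal_inf [set (`|a - b|)%:E | b in B] | a in A])
       (ereal_sup [set ereal_inf [set (`|a - b|)%:E | a in A] | b in B]).

Definition psum (F : nat -> set X) (n : nat) : set X :=
  [set x | exists f : nat -> X, (forall k, (k < n)%N -> F k (f k)) /\
                                x = \sum_(k < n) f k].

Definition dH_multimeasure {d} {T : measurableType d} (M : set T -> set X) : Prop :=
  (forall E, measurable E -> cb (M E)) /\
  (forall F : nat -> set T, (forall n, measurable (F n)) -> trivIset setT F ->
     (fun n => hausdorff (M (\bigcup_k F k)) (psum (fun k => M (F k)) n))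
       @ \oo --> 0%E).

Definition aco (A : set X) : set X :=
  [set x | exists n (a : 'I_n -> R) (v : 'I_n -> X),
     (forall i, A (v i)) /\ \sum_(i < n) `|a i| <= 1 /\
     x = \sum_(i < n) a i *: v i].

Definition closed_aco (A : set X) : set X := closure (aco A).

Definition range_restr {d} {T : measurableType d} (N : set T -> set X) (E : set T)
  : set X := [set z | exists F, measurable F /\ F `<=` E /\ N F z].

Definition neg_mm {d} {T : measurableType d} (N : set T -> set X) : set T -> set X :=
  fun E => [set - x | x in N E].

Definition scale_set (c : R) (A : set X) : set X := [set c *: x | x in A].

End Defs.

From HB Require Import structures.
From mathcomp Require Import all_boot all_order all_algebra.
From mathcomp Require Import all_classical all_reals all_analysis.
From mathcomp Require Import measurable_realfun lra.
Set Implicit Arguments. Unset Strict Implicit. Unset Printing Implicit Defensive.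
Import Order.TTheory GRing.Theory Num.Theory.
Import numFieldNormedType.Exports.
Local Open Scope classical_set_scope.
Local Open Scope ring_scope.

(* Let [x] be in [M(E)] and suppose [x / c] is outside the closed
   absolutely convex hull of [A = R(N_E) u R(-N_E)].  A separation
   theorem gives [u] in [B_X'] and [e > 0] with [u <= e] on [A] and
   [u (x / c) >= e].  Testing the hypothesis against evaluation at [u],
   whose value at [j(N F)] is the support function [s(u, N F)], yields two
   finite measures whose difference is bounded by [e] on the subsets of [E];
   integrating [theta] against it over [E] gives [s(u, M E) <= 2 C e], while
   [s(u, M E) >= u x >= c e]: a contradiction for [c = 2 C + 1]. *)

Section bounded_integrals.
Context d (T : measurableType d) (R : realType).
Implicit Types (m : {finite_measure set T -> \bar R}) (D : set T) (h : T -> R).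

Lemma bounded_integrable m D h K : measurable D -> measurable_fun [set: T] h ->
  (forall w, `|h w| <= K) -> m.-integrable D (EFin \o h).
Proof.
move=> mD mh hK; apply: measurable_bounded_integrable => //.
- by have := fin_num_measure m D mD; rewrite ge0_fin_numE.
- exact: measurable_funS mh.
- rewrite /bounded_near; near=> M => t Dt /=.
  apply: le_trans (hK t) _; near: M; exact: nbhs_pinfty_ge (num_real K).
Unshelve. all: end_near. Qed.

Lemma le_Rintegral_measure (m1 m2 : {finite_measure set T -> \bar R}) D h K : measurable D ->
  measurable_fun [set: T] h -> (forall w, 0 <= h w) -> (forall w, h w <= K) ->
  (forall A, measurable A -> A `<=` D -> (m1 A <= m2 A)%E) ->
  \int[m1]_(x in D) h x <= \int[m2]_(x in D) h x.
Proof.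
move=> mD mh h0 hK m12.
have hK' w : `|h w| <= K by rewrite ger0_norm.
apply: fine_le; [exact/integrable_fin_num/(bounded_integrable _ mD mh hK')..|].
rewrite (eq_measure_integral (mrestr m1 mD)); last first.
  by move=> A mA AD; rewrite /= /mrestr setIidl.
rewrite [leRHS](eq_measure_integral (mrestr m2 mD)); last first.
  by move=> A mA AD; rewrite /= /mrestr setIidl.
apply: ge0_le_measure_integral => //; last exact/measurable_EFinP.
- by move=> S mS; apply: m12; [exact: measurableI | exact: subIsetr].
Qed.

Lemma dominated_Rintegral_diff (m1 m2 : {finite_measure set T -> \bar R}) D h K : measurable D ->
  measurable_fun [set: T] h -> (forall w, `|h w| <= K) ->
  (forall A, measurable A -> A `<=` D -> (m1 A <= m2 A)%E) ->
  `|\int[m2]_(x in D) h x - \int[m1]_(x in D) h x| <=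
    K * (fine (m2 D) - fine (m1 D)).
Proof.
move=> mD mh hK m12.
have int m : m.-integrable D (EFin \o h) := bounded_integrable m mD mh hK.
have intK m : m.-integrable D (EFin \o cst K).
  by apply: (@bounded_integrable _ _ _ `|K|) => //; exact: measurable_cst.
have [hl hr] : (forall w, - K <= h w) /\ (forall w, h w <= K).
  by split => w; move: (hK w); rewrite ler_norml => /andP[].
have mono (s : R) : s = 1 \/ s = -1 ->
    \int[m1]_(x in D) (K - s * h x) <= \int[m2]_(x in D) (K - s * h x).
  move=> s1; apply: (le_Rintegral_measure (K := K + K)) => //.
  - by apply: measurable_funB; [exact: measurable_cst | exact: measurable_funM].
  - by move=> w; case: s1 => ->; have := hl w; have := hr w; lra.
  - by move=> w; case: s1 => ->; have := hl w; have := hr w; lra.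
have intSh m (s : R) : m.-integrable D (EFin \o (fun x => s * h x)).
  apply: (@bounded_integrable _ _ _ (`|s| * K)) => // [|w].
    exact: measurable_funM.
  by rewrite normrM ler_wpM2l.
have expand (m : {finite_measure set T -> \bar R}) (s : R) :
    \int[m]_(x in D) (K - s * h x) = K * fine (m D) - s * \int[m]_(x in D) h x.
  by rewrite (RintegralB mD (intK m) (intSh m s)) Rintegral_cst // (RintegralZl s mD (int m)).
have := mono 1 (or_introl erefl); have := mono (-1) (or_intror erefl).
rewrite !expand ler_norml; lra.
Qed.
End bounded_integrals.

Section charge_integral_bound.
Context d (T : measurableType d) (R : realType).
Implicit Types (mup mun : {finite_measure set T -> \bar R}).

Lemma finite_measure_diff_hahn mup mun : exists P : set T,
  [/\ measurable P,
      (forall A, measurable A -> A `<=` P -> (mun A <= mup A)%E) &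
      (forall A, measurable A -> A `<=` ~` P -> (mup A <= mun A)%E)].
Proof.
pose nu := cadd (charge_of_finite_measure mup) (copp (charge_of_finite_measure mun)).
have [P [N [[mP posP] [mN negN] PN _]]] := Hahn_decomposition nu.
exists P; split => // A mA AS.
- by rewrite -sube_ge0 ?fin_num_measure//; exact: posP.
- rewrite -sube_le0 ?fin_num_measure//; apply: negN => // x Ax.
  have : (P `|` N) x by rewrite PN.
  by case=> // Px; have := AS x Ax.
Qed.

(* If the signed measure [mup - mun] is bounded by [B] on the subsets of [E],
   then integrating over [E] a function bounded by [C] against it gives at
   most [2 C B]: split [E] along a Hahn decomposition and bound each part. *)
Lemma Rintegral_charge_bound mup mun (th : T -> R) (C B : R) (E : set T) :
  0 <= C -> measurable E -> measurable_fun [set: T] th ->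
  (forall w, `|th w| <= C) ->
  (forall F, measurable F -> F `<=` E -> `|fine (mup F) - fine (mun F)| <= B) ->
  `|\int[mup]_(w in E) th w - \int[mun]_(w in E) th w| <= 2 * C * B.
Proof.
move=> C0 mE mth thC bndE.
have [P [mP posP negP]] := finite_measure_diff_hahn mup mun.
have piece S : measurable S -> S `<=` E ->
    ((forall A, measurable A -> A `<=` S -> (mun A <= mup A)%E) \/
     (forall A, measurable A -> A `<=` S -> (mup A <= mun A)%E)) ->
    `|\int[mup]_(w in S) th w - \int[mun]_(w in S) th w| <= C * B.
  move=> mS SE [dom|dom].
  - apply: le_trans (dominated_Rintegral_diff mS mth thC dom) _.
    by apply: ler_wpM2l => //; apply: le_trans (ler_norm _) (bndE _ mS SE).
  - rewrite distrC; apply: le_trans (dominated_Rintegral_diff mS mth thC dom) _.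
    apply: ler_wpM2l => //; apply: le_trans (ler_norm _) _.
    by rewrite distrC; exact: bndE.
have mEP : measurable (E `&` P) by exact: measurableI.
have mEP' : measurable (E `&` ~` P) by apply: measurableI => //; exact: measurableC.
have hP := piece _ mEP (@subIsetl _ _ _)
  (or_introl (fun A mA AS => posP A mA (subset_trans AS (@subIsetr _ _ _)))).
have hP' := piece _ mEP' (@subIsetl _ _ _)
  (or_intror (fun A mA AS => negP A mA (subset_trans AS (@subIsetr _ _ _)))).
have split_int (m : {finite_measure set T -> \bar R}) : \int[m]_(w in E) th w =
    \int[m]_(w in E `&` P) th w + \int[m]_(w in E `&` ~` P) th w.
  have EPP : (E `&` P) `|` (E `&` ~` P) = E by rewrite -setIUr setUCr setIT.
  rewrite -[in LHS]EPP Rintegral_setU //.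
  - by rewrite EPP; exact: bounded_integrable mE mth thC.
  - by rewrite disj_set2E setIACA setICr !setI0.
rewrite !split_int -mulrA.
have -> : forall a b c e : R, a + b - (c + e) = (a - c) + (b - e) by move=> *; lra.
by apply: le_trans (ler_normD _ _) _; move: hP hP'; set x := C * B; lra.
Qed.
End charge_integral_bound.

Section hahn_banach.
Context {R : realType} {X : lmodType R}.
Variable p : X -> R.
Hypothesis p_subadd : forall a b, p (a + b) <= p a + p b.
Hypothesis p_poshom : forall t a, 0 < t -> p (t *: a) = t * p a.
Variable y0 : X.

Lemma sublinear0 : p 0 = 0.
Proof. by have := p_poshom 0 (ltr0n R 2); rewrite scaler0; lra. Qed.

(* The graph [G] of a linear functional defined on a subspace of [X],
   dominated by [p] and taking the value [p y0] at [y0]. *)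
Definition dominated_graph (G : set (X * R)) :=
  [/\ G (0, 0),
      (forall a b c, G a -> G b -> G (c *: a.1 + b.1, c * a.2 + b.2)),
      (forall x r s, G (x, r) -> G (x, s) -> r = s),
      (forall x r, G (x, r) -> r <= p x) &
      G (y0, p y0)].

Lemma dominated_graph_lin G c e x r y s : dominated_graph G ->
  G (x, r) -> G (y, s) -> G (c *: x + e *: y, c * r + e * s).
Proof.
move=> [G00 Glin _ _ _] Gx Gy.
have := Glin _ _ e Gy G00; rewrite /= !addr0 => Gey.
exact: Glin _ _ c Gx Gey.
Qed.

Definition line_graph : set (X * R) := [set q | exists t, q = (t *: y0, t * p y0)].

Lemma line_graph_dominated : dominated_graph line_graph.
Proof.
split.
- by exists 0; rewrite scale0r mul0r.
- move=> _ _ c [t ->] [t' ->] /=; exists (c * t + t').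
  by rewrite scalerDl scalerA mulrDl mulrA.
- move=> x r s [t [-> ->]] [t' [/eqP + ->]].
  rewrite -subr_eq0 -scalerBl scaler_eq0 subr_eq0 => /orP[/eqP -> //|/eqP y00].
  by rewrite y00 sublinear0 !mulr0.
- move=> x r [t [-> ->]].
  have [t0|t0|->] := ltgtP t 0; last by rewrite scale0r mul0r sublinear0.
  + have := p_subadd (t *: y0) (- t *: y0); rewrite -scalerDl subrr scale0r.
    by rewrite sublinear0 (@p_poshom (- t) y0) ?oppr_gt0 //; lra.
  + by rewrite p_poshom.
- by exists 1; rewrite scale1r mul1r.
Qed.

(* Zorn's lemma needs the union of the empty chain to qualify as well. *)
Definition admissible (G : set (X * R)) := dominated_graph G \/ G = set0.

Lemma admissible_dominated G a : admissible G -> G a -> dominated_graph G.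
Proof. by case=> // ->. Qed.

Lemma admissible_chain (F : set (set (X * R))) : F `<=` admissible ->
  total_on F subset -> admissible (\bigcup_(G in F) G).
Proof.
move=> Fadm tot.
have [[G1 [FG1 dG1]]|nF] := pselect (exists G, F G /\ dominated_graph G); last first.
  right; apply/seteqP; split => // q [G FG Gq].
  by apply: nF; exists G; split => //; exact: admissible_dominated (Fadm _ FG) Gq.
have dom G a : F G -> G a -> dominated_graph G.
  by move=> FG; exact: admissible_dominated (Fadm _ FG).
left; case: (dG1) => G00 _ _ _ Gy0; split.
- by exists G1.
- move=> a b c [Ga FGa aa] [Gb FGb bb].
  have [sab|sba] := tot _ _ FGa FGb.
  + by exists Gb => //; case: (dom _ _ FGb bb) => _ Glin _ _ _; exact: Glin (sab _ aa) bb.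
  + by exists Ga => //; case: (dom _ _ FGa aa) => _ Glin _ _ _; exact: Glin aa (sba _ bb).
- move=> x r s [Ga FGa aa] [Gb FGb bb].
  have [sab|sba] := tot _ _ FGa FGb.
  + by case: (dom _ _ FGb bb) => _ _ Gfun _ _; exact: Gfun (sab _ aa) bb.
  + by case: (dom _ _ FGa aa) => _ _ Gfun _ _; exact: Gfun aa (sba _ bb).
- by move=> x r [Ga FGa aa]; case: (dom _ _ FGa aa) => _ _ _ Gp _; exact: Gp.
- by exists G1.
Qed.

(* One-step extension: a dominated graph not defined at [z] extends to the
   subspace spanned by it and [z], setting the value [al] at [z], where [al]
   separates [r - p(x - z)] from [p(y + z) - s] over the graph points. *)
Lemma dominated_graph_extend A z : dominated_graph A ->
  ~ (exists r, A (z, r)) -> exists B, admissible B /\ A `<` B.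
Proof.
move=> dA nz; case: (dA) => A00 Alin Afun Ap Ay0.
have Ascale c x r : A (x, r) -> A (c *: x, c * r).
  by move=> Axr; have := Alin _ _ c Axr A00; rewrite /= !addr0.
have gap x r y s : A (x, r) -> A (y, s) -> r - p (x - z) <= p (y + z) - s.
  move=> Axr Ays; have := Ap _ _ (Alin _ _ 1 Axr Ays); rewrite /= scale1r mul1r.
  have := p_subadd (x - z) (y + z).
  by rewrite addrACA addNr addr0; lra.
pose S := [set v | exists x r, A (x, r) /\ v = r - p (x - z)].
have S0 : S !=set0 by exists (0 - p (0 - z)), 0, 0.
have Sub : ubound S (p z).
  by move=> v [x [r [Axr ->]]]; have := gap _ _ _ _ Axr A00; rewrite add0r subr0.
pose al := sup S.
have al_ge x r : A (x, r) -> r - p (x - z) <= al.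
  by move=> Axr; apply: ub_le_sup; [exists (p z) | exists x, r].
have al_le y s : A (y, s) -> al <= p (y + z) - s.
  by move=> Ays; apply: ge_sup S0 _ => v [x [r [Axr ->]]]; exact: gap.
pose B := [set q | exists x r t, A (x, r) /\ q = (x + t *: z, r + t * al)].
have AB : A `<=` B.
  by move=> [x r] Axr; exists x, r, 0; split => //; rewrite scale0r mul0r !addr0.
exists B; split; last first.
  split => // BA; apply: nz; exists al.
  by apply: BA; exists 0, 0, 1; split => //; rewrite scale1r mul1r !add0r.
left; split.
- exact: AB.
- move=> _ _ c [x1 [r1 [t1 [A1 ->]]]] [x2 [r2 [t2 [A2 ->]]]] /=.
  exists (c *: x1 + x2), (c * r1 + r2), (c * t1 + t2); split; first exact: Alin A1 A2.
  congr (_, _); last by rewrite mulrDr mulrDl mulrA; lra.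
  by rewrite scalerDr scalerA scalerDl addrACA.
- move=> x0 r s [x1 [r1 [t1 [A1 [e1 ->]]]]] [x2 [r2 [t2 [A2 [e2 ->]]]]].
  have [t12|t12] := eqVneq t1 t2.
    move: e2; rewrite e1 -t12 => /addIr x12.
    by rewrite x12 in A1; rewrite (Afun _ _ _ A1 A2).
  exfalso; apply: nz.
  have tn0 : t1 - t2 != 0 by rewrite subr_eq0.
  have ez : z = (t1 - t2)^-1 *: x2 + (- (t1 - t2)^-1) *: x1.
    have e3 : (t1 - t2) *: z = x2 - x1.
      have e12 : x1 + t1 *: z = x2 + t2 *: z by rewrite -e1 -e2.
      by apply/eqP; rewrite scalerBl subr_eq addrAC -e12 addrAC subrr add0r.
    by rewrite scaleNr -scalerBr -e3 scalerA mulVf // scale1r.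
  exists ((t1 - t2)^-1 * r2 + (- (t1 - t2)^-1) * r1); rewrite {1}ez.
  exact: dominated_graph_lin.
- move=> x0 r [x [r' [t [Axr [-> ->]]]]].
  have [t0|t0|->] := ltgtP t 0; last by rewrite scale0r mul0r !addr0; exact: Ap.
  + pose u := - t; have u0 : 0 < u by rewrite oppr_gt0.
    have := al_ge _ _ (Ascale u^-1 _ _ Axr).
    have -> : u^-1 *: x - z = u^-1 *: (x + t *: z).
      by rewrite scalerDr scalerA /u invrN mulNr mulVf ?lt_eqF // scaleN1r.
    rewrite p_poshom ?invr_gt0 // => h.
    have : u * (u^-1 * r' - u^-1 * p (x + t *: z)) <= u * al by rewrite ler_wpM2l // ltW.
    by rewrite mulrBr !mulrA mulfV ?lt0r_neq0 // !mul1r /u; lra.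
  + have := al_le _ _ (Ascale t^-1 _ _ Axr).
    have -> : t^-1 *: x + z = t^-1 *: (x + t *: z).
      by rewrite scalerDr scalerA mulVf ?gt_eqF // scale1r.
    rewrite p_poshom ?invr_gt0 // => h.
    have : t * al <= t * (t^-1 * p (x + t *: z) - t^-1 * r') by rewrite ler_wpM2l // ltW.
    by rewrite mulrBr !mulrA mulfV ?gt_eqF // !mul1r; lra.
- exact: AB.
Qed.

(* Hahn-Banach (analytic form): a linear functional dominated by the
   sublinear [p] and attaining [p y0] at [y0]; its graph is a maximal
   admissible graph given by Zorn's lemma. *)
Lemma hahn_banach : exists f : X -> R,
  [/\ (forall c a b, f (c *: a + b) = c * f a + f b),
      (forall x, f x <= p x) & f y0 = p y0].
Proof.
have [A [adA Amax]] := Zorn_bigcup admissible_chain.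
have dA : dominated_graph A.
  case: adA => // A0; exfalso; apply: (Amax line_graph); last first.
    by left; exact: line_graph_dominated.
  rewrite A0; split => // /(_ (0, 0)).
  by case: line_graph_dominated => + _ _ _ _ => /[swap] /[apply].
have total z : exists r, A (z, r).
  apply: contrapT => nz; have [B [adB AB]] := dominated_graph_extend dA nz.
  exact: Amax B AB adB.
pose f z := xget 0 [set r | A (z, r)].
have fA z : A (z, f z) by exact: (xgetPex 0 (total z)).
case: dA => _ Alin Afun Ap Ay0; exists f; split.
- by move=> c a b; apply: Afun (fA (c *: a + b)) (Alin _ _ c (fA a) (fA b)).
- by move=> x; exact: Ap (fA x).
- exact: Afun (fA y0) Ay0.
Qed.

End hahn_banach.

Section separation.
Context {R : realType} {X : normedModType R}.
Variable A : set X.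

(* [w] is a linear combination of points of [A] whose coefficients have
   total absolute value at most [s]; thus [aco A] is [aco_within ^~ 1]. *)
Definition aco_within (w : X) (s : R) := exists n (a : 'I_n -> R) (v : 'I_n -> X),
  (forall i, A (v i)) /\ \sum_(i < n) `|a i| <= s /\ w = \sum_(i < n) a i *: v i.

Lemma aco_within_ge0 w s : aco_within w s -> 0 <= s.
Proof. by move=> [n [a [v [_ [h _]]]]]; apply: le_trans h; apply: sumr_ge0. Qed.

Lemma aco_within0 : aco_within 0 0.
Proof. by exists 0%N, (fun=> 0), (fun=> 0); rewrite !big_ord0; split => // -[]. Qed.

Lemma aco_within_point a : A a -> aco_within a 1.
Proof.
move=> Aa; exists 1%N, (fun=> 1), (fun=> a).
by rewrite !big_ord1 normr1 scale1r.
Qed.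

Lemma aco_within_le w s s' : aco_within w s -> s <= s' -> aco_within w s'.
Proof.
move=> [n [a [v [Av [sa ->]]]]] ss'; exists n, a, v.
by split => //; split => //; apply: le_trans ss'.
Qed.

Lemma aco_withinZ w s t : aco_within w s -> aco_within (t *: w) (`|t| * s).
Proof.
move=> [n [a [v [Av [sa ->]]]]]; exists n, (fun i => t * a i), v; split => //; split.
  by under eq_bigr do rewrite normrM; rewrite -mulr_sumr ler_wpM2l.
by rewrite scaler_sumr; apply: eq_bigr => i _; rewrite scalerA.
Qed.

Lemma aco_withinD w1 s1 w2 s2 : aco_within w1 s1 -> aco_within w2 s2 ->
  aco_within (w1 + w2) (s1 + s2).
Proof.
move=> [n1 [a1 [v1 [Av1 [sa1 ->]]]]] [n2 [a2 [v2 [Av2 [sa2 ->]]]]].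
pose a i := match fintype.split i with inl j => a1 j | inr j => a2 j end.
pose v i := match fintype.split i with inl j => v1 j | inr j => v2 j end.
have al i : fintype.split (lshift n2 i) = inl i := unsplitK (inl _ i).
have ar i : fintype.split (rshift n1 i) = inr i := unsplitK (inr _ i).
exists (n1 + n2)%N, a, v; split.
  by move=> i; rewrite /v; case: (fintype.split i).
rewrite !big_split_ord /a /v; split.
  under eq_bigr do rewrite al; under [X in _ + X <= _]eq_bigr do rewrite ar.
  exact: lerD.
by congr (_ + _); apply: eq_bigr => i _; rewrite ?al ?ar.
Qed.

Section gauge.
Variable del : R.
Hypothesis del_gt0 : 0 < del.

(* The sublinear gauge [pg z = inf {s + |z - w| / del : aco_within w s}]:
   its unit sublevel set contains the [del]-neighbourhood of [aco A]. *)
Definition gauge_values z := [set e | exists w s, aco_within w s /\ e = s + `|z - w| / del].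
Definition gauge z := inf (gauge_values z).

Lemma gauge_values_neq0 z : gauge_values z !=set0.
Proof. by exists (0 + `|z - 0| / del), 0, 0; split => //; exact: aco_within0. Qed.

Lemma gauge_values_lbound z : has_lbound (gauge_values z).
Proof.
exists 0 => _ [w [s [ws ->]]]; apply: addr_ge0; first exact: aco_within_ge0 ws.
by apply: divr_ge0 => //; exact: ltW.
Qed.

Lemma gauge_le z w s : aco_within w s -> gauge z <= s + `|z - w| / del.
Proof. by move=> ws; apply: ge_inf (gauge_values_lbound z) _ _; exists w, s. Qed.

Lemma gauge_ge z b : (forall w s, aco_within w s -> b <= s + `|z - w| / del) ->
  b <= gauge z.
Proof.
by move=> h; apply: lb_le_inf (gauge_values_neq0 z) _ => _ [w [s [ws ->]]]; exact: h.
Qed.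

Lemma gauge_subadd a b : gauge (a + b) <= gauge a + gauge b.
Proof.
have sum w1 s1 w2 s2 : aco_within w1 s1 -> aco_within w2 s2 ->
    gauge (a + b) <= (s1 + `|a - w1| / del) + (s2 + `|b - w2| / del).
  move=> ws1 ws2; apply: le_trans (gauge_le _ (aco_withinD ws1 ws2)) _.
  have : `|a + b - (w1 + w2)| / del <= (`|a - w1| + `|b - w2|) / del.
    apply: ler_wpM2r; first by rewrite invr_ge0 ltW.
    by rewrite opprD addrACA ler_normD.
  by rewrite mulrDl; lra.
suff : gauge (a + b) - gauge a <= gauge b by lra.
apply: gauge_ge => w2 s2 ws2.
suff : gauge (a + b) - (s2 + `|b - w2| / del) <= gauge a by lra.
by apply: gauge_ge => w1 s1 ws1; have := sum _ _ _ _ ws1 ws2; lra.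
Qed.

Lemma gauge_poshom_le t a : 0 < t -> gauge (t *: a) <= t * gauge a.
Proof.
move=> t0; rewrite -ler_pdivrMl //; apply: gauge_ge => w s ws.
rewrite ler_pdivrMl //; apply: le_trans (gauge_le _ (aco_withinZ t ws)) _.
by rewrite -scalerBr normrZ gtr0_norm //; lra.
Qed.

Lemma gauge_poshom t a : 0 < t -> gauge (t *: a) = t * gauge a.
Proof.
move=> t0; apply/le_anti/andP; split; first exact: gauge_poshom_le.
have := @gauge_poshom_le t^-1 (t *: a).
rewrite invr_gt0 scalerA mulVf ?gt_eqF // scale1r => /(_ t0).
by rewrite -ler_pdivlMl.
Qed.

End gauge.

Lemma separation y : ~ closure (aco A) y -> exists (u : X -> R) (e : R),
  [/\ 0 < e, in_dual_ball u, e <= u y & forall a, A a -> u a <= e].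
Proof.
move=> /existsNP [B /not_implyP [nB yB]].
move: nB => /nbhs_ballP [del /= del0 ballB].
have far w : aco A w -> del <= `|y - w|.
  move=> acw; rewrite leNgt; apply/negP => yw; apply: yB; exists w; split => //.
  by apply: ballB; rewrite -ball_normE.
have [f [flin fp fy]] := hahn_banach (gauge_subadd del0) (gauge_poshom del0) y.
have f0 : f 0 = 0 by have := flin 1 0 0; rewrite scale1r addr0 mul1r; lra.
have fN z : f (- z) = - f z.
  by have := flin (-1) z 0; rewrite addr0 f0 addr0 scaleN1r mulN1r.
have fnorm z : f z <= `|z| / del.
  by apply: le_trans (fp z) _; apply: le_trans (gauge_le del0 z aco_within0) _; rewrite subr0 add0r.
have gauge_y : 1 <= gauge del y.
  apply: gauge_ge => w s ws; have s0 := aco_within_ge0 ws.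
  have ywd0 : 0 <= `|y - w| / del by apply: divr_ge0 => //; exact: ltW.
  have [s1|s1] := leP s 1; last by lra.
  have : 1 <= `|y - w| / del by rewrite ler_pdivlMr // mul1r; exact/far/(aco_within_le ws).
  by lra.
exists (fun z => del * f z), del; split => //.
- split; first by move=> c a b; rewrite flin mulrDr mulrCA.
  move=> z; rewrite normrM gtr0_norm // -ler_pdivlMl // mulrC ler_norml.
  by have := fnorm z; have := fnorm (- z); rewrite fN normrN => *; apply/andP; split; lra.
- by rewrite fy -{1}(mulr1 del) ler_pM2l.
- move=> a Aa; rewrite -{2}(mulr1 del) ler_pM2l //.
  apply: le_trans (fp a) _; apply: le_trans (gauge_le del0 a (aco_within_point Aa)) _.
  by rewrite subrr normr0 mul0r addr0.
Qed.

End separation.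

Section support_function.
Context {R : realType} {X : normedModType R}.
Implicit Types (u : X -> R) (S : set X).

Lemma fine_ereal_sup_between (S : set (\bar R)) (a b : R) :
  S a%:E -> ubound S b%:E -> a <= fine (ereal_sup S) <= b.
Proof.
move=> Sa Sb; have := ereal_sup_ubound Sa; have := ge_ereal_sup Sb.
by case: (ereal_sup S) => [r| |] //=; rewrite !lee_fin => -> ->.
Qed.

Lemma supp_fun_between u S s b : S s -> (forall t, S t -> u t <= b) ->
  u s <= supp_fun u S <= b.
Proof.
move=> Ss Sb; apply: fine_ereal_sup_between; first by exists s.
by move=> _ [t St <-]; rewrite lee_fin; exact: Sb.
Qed.

Lemma supp_fun_norm_le u S e : S !=set0 -> (forall t, S t -> `|u t| <= e) ->
  `|supp_fun u S| <= e.
Proof.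
move=> [s Ss] Se; have Sle t : S t -> u t <= e.
  by move=> St; apply: le_trans (ler_norm _) (Se t St).
have /andP[ge le] := supp_fun_between Ss Sle.
have := Se s Ss; rewrite !ler_norml => /andP[es _].
by rewrite le andbT; apply: le_trans ge.
Qed.

Lemma dual_ball0 u : in_dual_ball u -> u 0 = 0.
Proof. by move=> [ulin _]; have := ulin 1 0 0; rewrite scale1r addr0 mul1r; lra. Qed.

Lemma dual_ballZ u c x : in_dual_ball u -> u (c *: x) = c * u x.
Proof. by move=> du; have := du.1 c x 0; rewrite addr0 (dual_ball0 du) addr0. Qed.

Lemma supp_fun_ge u S t : in_dual_ball u -> bounded_set S -> S t ->
  u t <= supp_fun u S.
Proof.
move=> [_ unorm] /pinfty_ex_gt0[K _ SK] St.
have Sle s : S s -> u s <= K.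
  by move=> Ss; apply: le_trans (ler_norm _) (le_trans (unorm s) (SK s Ss)).
by have /andP[] := supp_fun_between St Sle.
Qed.

Lemma eval_linf_dual (v : @dual_ball R X) : linf_dual (fun g => g v).
Proof.
split => //; exists 1 => g [K gK]; rewrite mul1r /linf_norm.
pose S := [set (`|g w|)%:E | w in [set: @dual_ball R X]].
have Sv : S (`|g v|)%:E by exists v.
have SK : ubound S K%:E by move=> _ [w _ <-]; rewrite lee_fin.
by have /andP[] := fine_ereal_sup_between Sv SK.
Qed.

End support_function.

Unset Implicit Arguments.

Theorem mainTheorem15 (R : realType) (X : completeNormedModType R)
  (d : measure_display) (T : measurableType d)
  (M N : set T -> set X) :
  dH_multimeasure M -> dH_multimeasure N ->
  (exists theta : T -> R,
     measurable_fun setT theta /\ (exists C : R, forall w, `|theta w| <= C) /\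
     forall y : (@dual_ball R X -> R) -> R, linf_dual y ->
       exists (mup mun : {finite_measure set T -> \bar R}),
         (forall E, measurable E ->
            y (radstrom (N E)) = fine (mup E) - fine (mun E)) /\
         (forall E, measurable E ->
            y (radstrom (M E)) =
              fine (\int[mup]_(w in E) (theta w)%:E)
              - fine (\int[mun]_(w in E) (theta w)%:E))) ->
  exists c : R, 0 < c /\
    forall E, measurable E ->
      M E `<=` scale_set c
        (closed_aco (range_restr N E `|` range_restr (neg_mm N) E)).
Proof.
move=> [cbM _] [cbN _] [th [mth [[C thC] hy]]].
have thC' w : `|th w| <= `|C| by apply: le_trans (thC w) (ler_norm C).
pose c := 2 * `|C| + 1; have c_gt0 : 0 < c by rewrite ltr_wpDl.
exists c; split => // E mE x MEx.
exists (c^-1 *: x); last by rewrite scalerA mulfV ?gt_eqF // scale1r.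
apply: contrapT => /separation[u [e [e_gt0 du eu ue]]].
have [mup [mun [hyN hyM]]] := hy _ (eval_linf_dual (exist _ u du)).
have bndN F : measurable F -> F `<=` E -> `|fine (mup F) - fine (mun F)| <= e.
  move=> mF FE; rewrite -hyN //; apply: supp_fun_norm_le; first exact: (cbN F mF).1.
  move=> t Nt; rewrite ler_norml; apply/andP; split.
    rewrite lerNl -(mulN1r (u t)) -dual_ballZ // scaleN1r; apply: ue.
    by right; exists F; split => //; split => //; exists t.
  by apply: ue; left; exists F.
have := Rintegral_charge_bound (normr_ge0 C) mE mth thC' bndN.
rewrite -hyM // /radstrom /= => /(le_trans (ler_norm _)).
have := supp_fun_ge du (cbM E mE).2.2.1 MEx.
rewrite -[x](scalerKV (lt0r_neq0 c_gt0)) dual_ballZ //.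
have : c * e <= c * u (c^-1 *: x) by rewrite ler_pM2l.
rewrite /c mulrDl mul1r; lra.
Qed.
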